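(* Let $f$ be the harmonic function on $K$ with $f(p_0)=\alpha$, $f(p_1)=\beta$, $f(p_2)=\gamma$. Then the restriction of $f$ to the edge $[p_1,p_2]$, viewed as a function on $[0,1]$, is strictly increasing if and only if $\beta<\gamma$ and $2\beta-\gamma\le\alpha\le2\gamma-\beta$. Equivalently, for nonconstant $f$, the restriction is strictly monotone if and only if $(3\beta-\delta)(3\gamma-\delta)\le0$, where $\delta=\alpha+\beta+\gamma$.
   Context: Let $p_0,p_1,p_2$ be the vertices of a unit equilateral triangle in $\mathbb{R}^2$, $F_i(x)=(x+p_i)/2$, and $K$ the Sierpinski gasket (the attractor of $F_0,F_1,F_2$). Minimal triangles of the graph $G_m$ are the triangles with vertices $F_w(p_0),F_w(p_1),F_w(p_2)$ for words $w$ of length $m$ ($F_w$ the corresponding composition). A continuous $f:K\to\mathbb{R}$ is harmonic if for every $m\ge0$ and every minimal triangle of $G_m$ with vertices $v_i,v_j,v_k$, the value at the midpoint $v_{ij}$ of $[v_i,v_j]$ is $\frac15(2f(v_i)+2f(v_j)+f(v_k))$; such $f$ is uniquely determined by $(f(p_0),f(p_1),f(p_2))$. The edge $[p_1,p_2]$ is identified with $[0,1]$ via $t\mapsto p_1+t(p_2-p_1)$. *)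

From HB Require Import structures.
From mathcomp Require Import all_boot all_order all_algebra.
From mathcomp Require Import all_classical all_reals all_analysis.
Set Implicit Arguments. Unset Strict Implicit. Unset Printing Implicit Defensive.
Import Order.TTheory GRing.Theory Num.Theory numFieldNormedType.Exports.
Local Open Scope classical_set_scope.
Local Open Scope ring_scope.

Section SG.
Variable R : realType.
Notation pt := (R * R)%type.

Definition sqdist (x y : pt) : R := (x.1 - y.1) ^+ 2 + (x.2 - y.2) ^+ 2.

Definition unit_equilateral (p0 p1 p2 : pt) : Prop :=
  sqdist p0 p1 = 1 /\ sqdist p1 p2 = 1 /\ sqdist p0 p2 = 1.

Definition vtx (p0 p1 p2 : pt) (i : 'I_3) : pt :=
  if val i == 0%N then p0 else if val i == 1%N then p1 else p2.

Definition midpt (x y : pt) : pt := ((x.1 + y.1) / 2, (x.2 + y.2) / 2).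

Definition Fmap (p0 p1 p2 : pt) (i : 'I_3) (x : pt) : pt := midpt x (vtx p0 p1 p2 i).

(* F_w = F_{w_1} o ... o F_{w_m} for w = [:: w_1; ...; w_m] *)
Definition Fword (p0 p1 p2 : pt) (w : seq 'I_3) (x : pt) : pt :=
  foldr (fun i (g : pt -> pt) => fun y => Fmap p0 p1 p2 i (g y)) id w x.

Definition is_attractor (p0 p1 p2 : pt) (K : set pt) : Prop :=
  compact K /\ K !=set0 /\ K = \bigcup_(i in [set: 'I_3]) (Fmap p0 p1 p2 i @` K).

Definition sg_harmonic (p0 p1 p2 : pt) (K : set pt) (f : pt -> R) : Prop :=
  {within K, continuous f} /\
  forall (m : nat) (w : seq 'I_3), size w = m ->
  forall i j k : 'I_3, i != j -> j != k -> i != k ->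
    let v := fun l => Fword p0 p1 p2 w (vtx p0 p1 p2 l) in
    f (midpt (v i) (v j)) = (2 * f (v i) + 2 * f (v j) + f (v k)) / 5.

Definition edge12 (p1 p2 : pt) (t : R) : pt :=
  (p1.1 + t * (p2.1 - p1.1), p1.2 + t * (p2.2 - p1.2)).

Definition strictly_increasing01 (g : R -> R) : Prop :=
  forall s t, 0 <= s -> s < t -> t <= 1 -> g s < g t.
Definition strictly_decreasing01 (g : R -> R) : Prop :=
  forall s t, 0 <= s -> s < t -> t <= 1 -> g t < g s.

End SG.

From mathcomp Require Import all_boot all_order all_algebra.
From mathcomp Require Import all_classical all_reals all_analysis.
From mathcomp Require Import ring lra zify.
Import Order.TTheory GRing.Theory Num.Theory numFieldNormedType.Exports.
Local Open Scope classical_set_scope.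
Local Open Scope ring_scope.
Set Implicit Arguments. Unset Strict Implicit.

(* Let a, b, c be the values of f at the vertices F_w(p0), F_w(p1), F_w(p2) of a
   cell along the edge [p1, p2].  On its left half-cell F_w F_1 the value b is kept
   and (a, c) becomes ((2a + 2b + c)/5, (2c + 2b + a)/5); in terms of the jump
   d = c - b along the edge and the defect e = a - 2b + c this reads
   (d, e) |-> ((d + e)/5, 3e/5), and symmetrically on the right half-cell with the
   defect 2c - b - a.  Hence the cone b < c, 2b - c <= a <= 2c - b is stable under
   both halvings, so f increases between consecutive dyadic points of the edge, and
   by continuity on all of it (the edge lies in the closed set K).  Conversely, a
   negative defect makes 5^n d_n = d + e (3^n - 1)/2 negative for large n, so f
   decreases near an end of the edge.  The decreasing case is the increasing case
   for -f, and when b = c the product condition forces a = b, so f is constant on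
   the cell vertices, which are dense in K. *)

Lemma dyadicS_left (R : numFieldType) (x : R) m : x / 2 ^+ m.+1 = x / 2 ^+ m / 2.
Proof. by rewrite exprSr invfM mulrA. Qed.

Lemma dyadicS_right (R : numFieldType) m k : (2 ^ m <= k)%N ->
  k%:R / 2 ^+ m.+1 = (1 + (k - 2 ^ m)%:R / 2 ^+ m) / 2 :> R.
Proof.
by move=> km; rewrite natrB // natrX exprSr; field; rewrite expf_neq0 ?pnatr_eq0.
Qed.

Section Dyadic.
Variable R : archiRealFieldType.

Definition dyadic01 (x : R) := exists m k, (k <= 2 ^ m)%N /\ x = k%:R / 2 ^+ m.

Lemma pow2_unbounded (C e : R) : 0 < e -> exists n, C < e * 2 ^+ n.
Proof.
move=> e_gt0; exists (Num.truncn (C / e)).+1.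
have n_lt_pow2 : (Num.truncn (C / e)).+1%:R < 2 ^+ (Num.truncn (C / e)).+1 :> R.
  by rewrite -natrX ltr_nat ltn_expl.
by rewrite mulrC -ltr_pdivrMr //; apply: lt_trans (truncnS_gt _) n_lt_pow2.
Qed.

Lemma dyadic01_ge0 x : dyadic01 x -> 0 <= x.
Proof. by move=> [m [k [_ ->]]]; rewrite divr_ge0 // exprn_ge0. Qed.

Lemma dyadic01_le1 x : dyadic01 x -> x <= 1.
Proof.
by move=> [m [k [km ->]]]; rewrite ler_pdivrMr ?exprn_gt0 // mul1r -natrX ler_nat.
Qed.

Lemma dyadic01_between u v : 0 <= u -> u < v -> v <= 1 ->
  exists2 q, dyadic01 q & u < q < v.
Proof.
move=> u_ge0 uv v_le1.
have [m hm] := pow2_unbounded 1 (ltac:(by rewrite subr_gt0) : 0 < v - u).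
have P_gt0 : 0 < 2 ^+ m :> R by rewrite exprn_gt0.
set k := (Num.truncn (u * 2 ^+ m)).+1.
have k_gt : u * 2 ^+ m < k%:R by exact: truncnS_gt.
have k_le : k%:R <= u * 2 ^+ m + 1.
  by rewrite /k -addn1 natrD lerD // truncn_le mulr_ge0 // ltW.
have k_lt : k%:R < v * 2 ^+ m by move: hm; rewrite mulrBl; lra.
exists (k%:R / 2 ^+ m).
  exists m, k; split => //; rewrite -ltnS -(ltr_nat R) -addn1 natrD natrX.
  have : v * 2 ^+ m <= 2 ^+ m by rewrite ler_piMl // ltW.
  lra.
by rewrite ltr_pdivlMr // ltr_pdivrMr // k_gt k_lt.
Qed.

Lemma dyadic01_approx t d : 0 <= t -> t <= 1 -> 0 < d ->
  exists2 q, dyadic01 q & `|t - q| < d.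
Proof.
move=> t_ge0 t_le1 d_gt0; have [t_lt1|t_ge1] := ltP t 1.
  have [q dq /andP[tq]] := dyadic01_between t_ge0
    (ltac:(by rewrite lt_min t_lt1 ltrDl d_gt0) : t < Num.min (t + d) 1)
    (ltac:(by rewrite ge_min lexx orbT) : Num.min (t + d) 1 <= 1).
  rewrite lt_min => /andP[qtd _]; exists q => //.
  by rewrite distrC ger0_norm; lra.
exists 1; first by exists 0%N, 1%N; rewrite expr0 divr1.
have -> : t = 1 by apply/eqP; rewrite eq_le t_le1 t_ge1.
by rewrite subrr normr0.
Qed.

Lemma dyadic01_common_denominator x y : dyadic01 x -> dyadic01 y ->
  exists m k l, [/\ (k <= 2 ^ m)%N, (l <= 2 ^ m)%N,
                    x = k%:R / 2 ^+ m & y = l%:R / 2 ^+ m].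
Proof.
move=> [m [k [km ->]]] [n [l [ln ->]]].
exists (m + n)%N, (k * 2 ^ n)%N, (l * 2 ^ m)%N.
split; first by rewrite expnD leq_mul2r km orbT.
- by rewrite expnD mulnC leq_mul2l ln orbT.
- by rewrite natrM natrX exprD; field; rewrite !expf_neq0 ?pnatr_eq0.
- by rewrite natrM natrX exprD; field; rewrite !expf_neq0 ?pnatr_eq0.
Qed.

Lemma dyadic01_ltr_of_steps (h : R -> R) :
  (forall m k, (k < 2 ^ m)%N -> h (k%:R / 2 ^+ m) < h (k.+1%:R / 2 ^+ m)) ->
  forall x y, dyadic01 x -> dyadic01 y -> x < y -> h x < h y.
Proof.
move=> h_step x y dx dy xy.
have [m [k [l [km lm ex ey]]]] := dyadic01_common_denominator dx dy.
have : (k < l)%N by move: xy; rewrite ex ey ltr_pM2r ?invr_gt0 ?exprn_gt0 // ltr_nat.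
rewrite ex ey {x y dx dy xy ex ey km}.
elim: l lm => // l IH lm; rewrite ltnS leq_eqVlt => /predU1P[-> | kl].
  exact: h_step.
exact: lt_trans (IH (ltnW lm) kl) (h_step _ _ lm).
Qed.

End Dyadic.

Lemma defect_ge0_of_jumps_gt0 (R : archiRealFieldType) (d e : nat -> R) :
  (forall n, d n.+1 = (d n + e n) / 5) -> (forall n, e n.+1 = 3 * e n / 5) ->
  (forall n, 0 < d n) -> 0 <= e 0.
Proof.
move=> dS eS d_gt0.
have closed_form n : 5 ^+ n * e n = 3 ^+ n * e 0 /\
                     2 * 5 ^+ n * d n = 2 * d 0 + (3 ^+ n - 1) * e 0.
  elim: n => [|n [IHe IHd]]; first by rewrite !expr0; split; ring.
  rewrite dS eS !exprS.
  have -> : 5 * 5 ^+ n * (3 * e n / 5) = 3 * (5 ^+ n * e n) by field.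
  have -> : 2 * (5 * 5 ^+ n) * ((d n + e n) / 5) =
            2 * 5 ^+ n * d n + 2 * (5 ^+ n * e n) by field.
  by rewrite IHe IHd; split; ring.
have pow3 k : 1 + 2 * k%:R <= 3 ^+ k :> R.
  elim: k => [|k IH]; first by rewrite expr0; lra.
  by rewrite exprS -addn1 natrD; have := ler0n R k; lra.
rewrite leNgt; apply/negP => e0_lt0.
set n := (Num.truncn (d 0 / - e 0)).+1.
have : d 0 < n%:R * - e 0 by rewrite -ltr_pdivrMr ?oppr_gt0 //; exact: truncnS_gt.
have [_ dn] := closed_form n.
have : 0 < 2 * 5 ^+ n * d n by rewrite mulr_gt0 ?exprn_gt0.
have := pow3 n; rewrite dn; nra.
Qed.

Definition continuous01 (R : realType) (h : R -> R) :=
  forall t, 0 <= t -> t <= 1 -> forall e, 0 < e -> exists2 d, 0 < d &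
  forall s, 0 <= s -> s <= 1 -> `|t - s| < d -> `|h t - h s| < e.

Section DyadicExtension.
Variables (R : realType) (h : R -> R).
Hypothesis h_cont : continuous01 h.
Hypothesis h_dyadic : forall x y, dyadic01 x -> dyadic01 y -> x < y -> h x < h y.

Lemma le_dyadic01_right s q : 0 <= s -> dyadic01 q -> s < q -> h s <= h q.
Proof.
move=> s_ge0 dq sq; rewrite leNgt; apply/negP => hqs.
have s_le1 : s <= 1 by apply: le_trans (ltW sq) (dyadic01_le1 dq).
have [d d_gt0 hd] := h_cont s_ge0 s_le1 (ltac:(by rewrite subr_gt0) : 0 < h s - h q).
have [q' dq' /andP[sq']] := dyadic01_between s_ge0
  (ltac:(by rewrite lt_min sq ltrDl d_gt0) : s < Num.min (s + d) q)
  (ltac:(by rewrite ge_min (dyadic01_le1 dq) orbT) : Num.min (s + d) q <= 1).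
rewrite lt_min => /andP[q'sd q'q].
have := hd q' (dyadic01_ge0 dq') (dyadic01_le1 dq').
rewrite distrC ger0_norm ?subr_ge0 ?ltW // => /(_ ltac:(lra)).
have := h_dyadic dq' dq q'q; rewrite ltr_norml; lra.
Qed.

Lemma le_dyadic01_left q t : dyadic01 q -> q < t -> t <= 1 -> h q <= h t.
Proof.
move=> dq qt t_le1; rewrite leNgt; apply/negP => htq.
have t_ge0 : 0 <= t by apply: le_trans (dyadic01_ge0 dq) (ltW qt).
have [d d_gt0 hd] := h_cont t_ge0 t_le1 (ltac:(by rewrite subr_gt0) : 0 < h q - h t).
have [q' dq' /andP[]] := dyadic01_between
  (ltac:(by rewrite le_max (dyadic01_ge0 dq) orbT) : 0 <= Num.max (t - d) q)
  (ltac:(by rewrite gt_max qt gtrBl d_gt0) : Num.max (t - d) q < t) t_le1.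
rewrite gt_max => /andP[tdq' qq'] q't.
have := hd q' (dyadic01_ge0 dq') (dyadic01_le1 dq').
rewrite ger0_norm ?subr_ge0 ?ltW // => /(_ ltac:(lra)).
have := h_dyadic dq dq' qq'; rewrite ltr_norml; lra.
Qed.

Lemma strictly_increasing01_of_dyadic : strictly_increasing01 h.
Proof.
move=> s t s_ge0 st t_le1.
have [q1 dq1 /andP[sq1 q1t]] := dyadic01_between s_ge0 st t_le1.
have [q2 dq2 /andP[q1q2 q2t]] := dyadic01_between (dyadic01_ge0 dq1) q1t t_le1.
apply: le_lt_trans (le_dyadic01_right s_ge0 dq1 sq1) _.
exact: lt_le_trans (h_dyadic dq1 dq2 q1q2) (le_dyadic01_left dq2 q2t t_le1).
Qed.

End DyadicExtension.

Lemma nseqS_rcons (T : Type) n (x : T) : nseq n.+1 x = rcons (nseq n x) x.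
Proof. by elim: n => //= n ->. Qed.

Section Cells.
Variables (R : realType) (p0 p1 p2 : R * R).

Definition cell_vtx (w : seq 'I_3) (j : 'I_3) : R * R :=
  Fword p0 p1 p2 w (vtx p0 p1 p2 j).

Definition cell_edge (w : seq 'I_3) : R -> R * R :=
  edge12 (cell_vtx w 1) (cell_vtx w 2).

Lemma midpt_id (x : R * R) : midpt x x = x.
Proof. by case: x => a b; rewrite /midpt /=; congr (_, _); field. Qed.

Lemma Fword_midpt w x y :
  Fword p0 p1 p2 w (midpt x y) = midpt (Fword p0 p1 p2 w x) (Fword p0 p1 p2 w y).
Proof.
by elim: w => [//|i w IH]; rewrite /= IH /Fmap /midpt /=; congr (_, _); field.
Qed.

Lemma Fword_rcons w i x :
  Fword p0 p1 p2 (rcons w i) x = Fword p0 p1 p2 w (Fmap p0 p1 p2 i x).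
Proof. by elim: w => [//|a w IH]; rewrite rcons_cons /= IH. Qed.

Lemma Fword_sub w x y :
  (Fword p0 p1 p2 w x).1 - (Fword p0 p1 p2 w y).1 = (x.1 - y.1) / 2 ^+ size w /\
  (Fword p0 p1 p2 w x).2 - (Fword p0 p1 p2 w y).2 = (x.2 - y.2) / 2 ^+ size w.
Proof.
elim: w => [|i w [IH1 IH2]] /=; first by rewrite expr0 !divr1.
by rewrite /Fmap /midpt /= !dyadicS_left -IH1 -IH2; split; field.
Qed.

Lemma cell_vtx_rcons w i j :
  cell_vtx (rcons w i) j = midpt (cell_vtx w j) (cell_vtx w i).
Proof. by rewrite /cell_vtx Fword_rcons /Fmap Fword_midpt. Qed.

Lemma edge12_0 (q1 q2 : R * R) : edge12 q1 q2 0 = q1.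
Proof. by case: q1 => a b; rewrite /edge12 /= !mul0r !addr0. Qed.

Lemma edge12_1 (q1 q2 : R * R) : edge12 q1 q2 1 = q2.
Proof. by case: q1 q2 => a b [c d]; rewrite /edge12 /= !mul1r !subrKC. Qed.

Lemma cell_edge_rcons1 w t : cell_edge (rcons w 1) t = cell_edge w (t / 2).
Proof. by rewrite /cell_edge !cell_vtx_rcons /edge12 /midpt /=; congr (_, _); field. Qed.

Lemma cell_edge_rcons2 w t : cell_edge (rcons w 2) t = cell_edge w ((1 + t) / 2).
Proof. by rewrite /cell_edge !cell_vtx_rcons /edge12 /midpt /=; congr (_, _); field. Qed.

Lemma cell_edge_nseq1 n t : cell_edge (nseq n 1) t = cell_edge [::] (t / 2 ^+ n).
Proof.
elim: n t => [|n IH] t; first by rewrite expr0 divr1.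
by rewrite nseqS_rcons cell_edge_rcons1 IH dyadicS_left mulrAC.
Qed.

Lemma cell_edge_nseq2 n t :
  cell_edge (nseq n 2) t = cell_edge [::] (1 - (1 - t) / 2 ^+ n).
Proof.
elim: n t => [|n IH] t; first by rewrite expr0 divr1 subKr.
rewrite nseqS_rcons cell_edge_rcons2 IH exprSr; congr cell_edge.
by field; rewrite expf_neq0 ?pnatr_eq0.
Qed.

Definition harmonic_cells (f : R * R -> R) := forall w (i j k : 'I_3),
  i != j -> j != k -> i != k ->
  f (midpt (cell_vtx w i) (cell_vtx w j)) =
  (2 * f (cell_vtx w i) + 2 * f (cell_vtx w j) + f (cell_vtx w k)) / 5.

Lemma sg_harmonic_cells K f : sg_harmonic p0 p1 p2 K f -> harmonic_cells f.
Proof. by move=> [_ f_harm] w i j k; exact: f_harm _ w erefl i j k. Qed.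

Lemma harmonic_cellsN f : harmonic_cells f -> harmonic_cells (fun x => - f x).
Proof. by move=> f_harm w i j k ij jk ik; rewrite (f_harm w i j k) //; field. Qed.

End Cells.

Lemma ord3_avoid2 (i j : 'I_3) : exists k, i != k /\ j != k.
Proof.
by case: i j => [[|[|[|//]]] ?] [[|[|[|//]]] ?];
  [exists 1 | exists 2 | exists 1 | exists 2 | exists 0 | exists 0
  | exists 1 | exists 0 | exists 0].
Qed.

Definition incr_data (R : numDomainType) (a b c : R) :=
  b < c /\ 2 * b - c <= a /\ a <= 2 * c - b.

Section HarmonicEdge.
Variables (R : realType) (p0 p1 p2 : R * R) (f : R * R -> R).
Hypothesis f_harm : harmonic_cells p0 p1 p2 f.

Local Notation fv w j := (f (cell_vtx p0 p1 p2 w j)).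
Local Notation g w t := (f (cell_edge p0 p1 p2 w t)).

Lemma cell_vals_rcons1 w :
  [/\ fv (rcons w 1) 0 = (2 * fv w 0 + 2 * fv w 1 + fv w 2) / 5,
      fv (rcons w 1) 1 = fv w 1 &
      fv (rcons w 1) 2 = (2 * fv w 2 + 2 * fv w 1 + fv w 0) / 5].
Proof.
by rewrite !cell_vtx_rcons midpt_id (@f_harm w 0 1 2) // (@f_harm w 2 1 0).
Qed.

Lemma cell_vals_rcons2 w :
  [/\ fv (rcons w 2) 0 = (2 * fv w 0 + 2 * fv w 2 + fv w 1) / 5,
      fv (rcons w 2) 1 = (2 * fv w 1 + 2 * fv w 2 + fv w 0) / 5 &
      fv (rcons w 2) 2 = fv w 2].
Proof.
by rewrite !cell_vtx_rcons midpt_id (@f_harm w 0 2 1) // (@f_harm w 1 2 0).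
Qed.

Lemma cell_edge_ends w : g w 0 = fv w 1 /\ g w 1 = fv w 2.
Proof. by rewrite /cell_edge edge12_0 edge12_1. Qed.

Lemma incr_data_rcons1 w : incr_data (fv w 0) (fv w 1) (fv w 2) ->
  incr_data (fv (rcons w 1) 0) (fv (rcons w 1) 1) (fv (rcons w 1) 2).
Proof. by case: (cell_vals_rcons1 w) => -> -> ->; rewrite /incr_data; lra. Qed.

Lemma incr_data_rcons2 w : incr_data (fv w 0) (fv w 1) (fv w 2) ->
  incr_data (fv (rcons w 2) 0) (fv (rcons w 2) 1) (fv (rcons w 2) 2).
Proof. by case: (cell_vals_rcons2 w) => -> -> ->; rewrite /incr_data; lra. Qed.

Lemma cell_edge_dyadic_step m : forall w, incr_data (fv w 0) (fv w 1) (fv w 2) ->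
  forall k, (k < 2 ^ m)%N -> g w (k%:R / 2 ^+ m) < g w (k.+1%:R / 2 ^+ m).
Proof.
elim: m => [|m IH] w w_incr k km.
  have -> : k = 0%N by case: k km.
  by rewrite expr0 !divr1 (cell_edge_ends w).1 (cell_edge_ends w).2; case: w_incr.
have [kl | lk] := ltnP k (2 ^ m).
  by rewrite !dyadicS_left -!cell_edge_rcons1; apply: IH kl; exact: incr_data_rcons1.
rewrite !dyadicS_right ?(leqW lk) // -!cell_edge_rcons2 subSn //.
by apply: IH; [exact: incr_data_rcons2 | move: km; rewrite expnS; lia].
Qed.

Lemma edge_incr_of_incr_data : continuous01 (fun t => g [::] t) ->
  incr_data (fv [::] 0) (fv [::] 1) (fv [::] 2) -> strictly_increasing01 (fun t => g [::] t).
Proof.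
move=> g_cont root_incr; apply: strictly_increasing01_of_dyadic g_cont _.
by apply: dyadic01_ltr_of_steps => m k; exact: cell_edge_dyadic_step.
Qed.

Lemma left_defect_ge0 : strictly_increasing01 (fun t => g [::] t) ->
  2 * fv [::] 1 - fv [::] 2 <= fv [::] 0.
Proof.
move=> g_incr.
pose d n := fv (nseq n 1) 2 - fv (nseq n 1) 1.
pose e n := fv (nseq n 1) 0 - 2 * fv (nseq n 1) 1 + fv (nseq n 1) 2.
suff : 0 <= e 0%N by rewrite /e /=; lra.
apply: (@defect_ge0_of_jumps_gt0 _ d) => n.
- by rewrite /d /e nseqS_rcons; case: (cell_vals_rcons1 (nseq n 1)) => _ -> ->; field.
- by rewrite /e nseqS_rcons; case: (cell_vals_rcons1 (nseq n 1)) => -> -> ->; field.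
rewrite /d; have [<- <-] := cell_edge_ends (nseq n 1).
rewrite !cell_edge_nseq1 mul0r mul1r subr_gt0; apply: g_incr => //.
by rewrite invf_le1 ?exprn_gt0 // exprn_ege1 // ler1n.
Qed.

Lemma right_defect_ge0 : strictly_increasing01 (fun t => g [::] t) ->
  fv [::] 0 <= 2 * fv [::] 2 - fv [::] 1.
Proof.
move=> g_incr.
pose d n := fv (nseq n 2) 2 - fv (nseq n 2) 1.
pose e n := 2 * fv (nseq n 2) 2 - fv (nseq n 2) 1 - fv (nseq n 2) 0.
suff : 0 <= e 0%N by rewrite /e /=; lra.
apply: (@defect_ge0_of_jumps_gt0 _ d) => n.
- by rewrite /d /e nseqS_rcons; case: (cell_vals_rcons2 (nseq n 2)) => _ -> ->; field.
- by rewrite /e nseqS_rcons; case: (cell_vals_rcons2 (nseq n 2)) => -> -> ->; field.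
rewrite /d; have [<- <-] := cell_edge_ends (nseq n 2).
rewrite !cell_edge_nseq2 subrr mul0r !subr0 mul1r subr_gt0.
have pow_inv_gt0 : 0 < (2 ^+ n : R)^-1 by rewrite invr_gt0 exprn_gt0.
have pow_inv_le1 : (2 ^+ n : R)^-1 <= 1 by rewrite invf_le1 ?exprn_gt0 // exprn_ege1 // ler1n.
by apply: g_incr; lra.
Qed.

Lemma incr_data_of_edge_incr : strictly_increasing01 (fun t => g [::] t) ->
  incr_data (fv [::] 0) (fv [::] 1) (fv [::] 2).
Proof.
move=> g_incr; split; last by split; [exact: left_defect_ge0 | exact: right_defect_ge0].
by have [<- <-] := cell_edge_ends [::]; apply: g_incr; rewrite ?ler01.
Qed.

Lemma cell_vals_cst a : (forall j, fv [::] j = a) -> forall w j, fv w j = a.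
Proof.
move=> root_cst w; elim/last_ind: w => [//|w i IH] j.
rewrite cell_vtx_rcons; have [-> | ji] := eqVneq j i; first by rewrite midpt_id IH.
have [k [jk ik]] := ord3_avoid2 j i.
by rewrite (@f_harm w j i k) // !IH; field.
Qed.

End HarmonicEdge.

Section PlaneTopology.
Variable R : realType.

Lemma ball_coord (x y : R * R) e :
  `|x.1 - y.1| < e -> `|x.2 - y.2| < e -> ball x e y.
Proof. by move=> h1 h2; split; rewrite /= -ball_normE. Qed.

Lemma closed_coord_approx (K : set (R * R)) x : closed K ->
  (forall e, 0 < e -> exists y, K y /\ `|x.1 - y.1| < e /\ `|x.2 - y.2| < e) -> K x.
Proof.
move=> K_closed x_approx; rewrite (closure_id K).1 // => B /nbhs_ballP[e e_gt0 eB].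
have [y [Ky [h1 h2]]] := x_approx e e_gt0.
by exists y; split => //; apply/eB/ball_coord.
Qed.

Lemma continuous_within_coord (K : set (R * R)) (f : R * R -> R) x :
  {within K, continuous f} -> K x -> forall e, 0 < e -> exists2 d, 0 < d &
  forall y, K y -> `|x.1 - y.1| < d -> `|x.2 - y.2| < d -> `|f x - f y| < e.
Proof.
move=> /subspace_continuousP f_cont Kx e e_gt0.
have /cvgrPdist_lt /(_ e e_gt0) /nbhs_ballP[d d_gt0 dB] := f_cont x Kx.
by exists d => // y Ky h1 h2; apply: dB => //; apply: ball_coord.
Qed.

Lemma compact_coord_bounded (K : set (R * R)) : compact K ->
  exists M : R, forall x, K x -> `|x.1| <= M /\ `|x.2| <= M.
Proof.
move=> /compact_bounded[M [_ M_bound]]; exists (`|M| + 1) => x Kx.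
have /M_bound /(_ x Kx) : M < `|M| + 1 by apply: le_lt_trans (ler_norm M) _; rewrite ltrDl.
by rewrite /= prod_normE ge_max => /andP.
Qed.

End PlaneTopology.

Lemma edge12_coord_close (R : realType) (q1 q2 : R * R) t s d :
  `|t - s| * (`|q2.1 - q1.1| + `|q2.2 - q1.2| + 1) < d ->
  `|(edge12 q1 q2 t).1 - (edge12 q1 q2 s).1| < d /\
  `|(edge12 q1 q2 t).2 - (edge12 q1 q2 s).2| < d.
Proof.
have -> : (edge12 q1 q2 t).1 - (edge12 q1 q2 s).1 = (t - s) * (q2.1 - q1.1).
  by rewrite /edge12 /=; ring.
have -> : (edge12 q1 q2 t).2 - (edge12 q1 q2 s).2 = (t - s) * (q2.2 - q1.2).
  by rewrite /edge12 /=; ring.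
rewrite !normrM => close.
have := normr_ge0 (q2.1 - q1.1); have := normr_ge0 (q2.2 - q1.2).
have := normr_ge0 (t - s); split; nra.
Qed.

Section Attractor.
Variables (R : realType) (p0 p1 p2 : R * R) (K : set (R * R)).
Hypothesis K_attr : is_attractor p0 p1 p2 K.

Lemma attractor_closed : closed K.
Proof. by case: K_attr => K_compact _; apply: compact_closed. Qed.

Lemma Fword_in_attractor w y : K y -> K (Fword p0 p1 p2 w y).
Proof.
case: K_attr => _ [_ K_fix] Ky; elim: w => [//|i w IH] /=.
by rewrite K_fix; exists i => //; exists (Fword p0 p1 p2 w y).
Qed.

Lemma Fword_sub_small w x y e : 0 < e ->
  `|x.1 - y.1| + `|x.2 - y.2| < e * 2 ^+ size w ->
  `|(Fword p0 p1 p2 w x).1 - (Fword p0 p1 p2 w y).1| < e /\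
  `|(Fword p0 p1 p2 w x).2 - (Fword p0 p1 p2 w y).2| < e.
Proof.
move=> e_gt0; have [-> ->] := Fword_sub p0 p1 p2 w x y.
have pow_gt0 : 0 < 2 ^+ size w :> R by rewrite exprn_gt0.
rewrite !normrM !normfV !(gtr0_norm pow_gt0) !ltr_pdivrMr // => close.
by have := normr_ge0 (x.1 - y.1); have := normr_ge0 (x.2 - y.2); split; lra.
Qed.

Lemma vtx_in_attractor j : K (vtx p0 p1 p2 j).
Proof.
case: K_attr => _ [[x Kx] _]; apply: closed_coord_approx attractor_closed _ => e e_gt0.
pose v := vtx p0 p1 p2 j.
have [n close] := pow2_unbounded (`|x.1 - v.1| + `|x.2 - v.2|) e_gt0.
have v_fix : Fword p0 p1 p2 (nseq n j) v = v.
  by elim: n {close} => [//|n IH]; rewrite /= IH /Fmap midpt_id.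
exists (Fword p0 p1 p2 (nseq n j) x); split; first exact: Fword_in_attractor.
rewrite !(distrC v.1) !(distrC v.2) -{1 2}v_fix.
by apply: Fword_sub_small; rewrite ?size_nseq.
Qed.

Lemma cell_vtx_in_attractor w j : K (cell_vtx p0 p1 p2 w j).
Proof. exact/Fword_in_attractor/vtx_in_attractor. Qed.

Lemma cell_edge_dyadic_in_attractor m : forall w k, (k <= 2 ^ m)%N ->
  K (cell_edge p0 p1 p2 w (k%:R / 2 ^+ m)).
Proof.
elim: m => [|m IH] w k km.
  rewrite expr0 divr1; case: k km => [|[|//]] _.
    by rewrite /cell_edge edge12_0; apply: cell_vtx_in_attractor.
  by rewrite /cell_edge edge12_1; apply: cell_vtx_in_attractor.
have [kl | lk] := leqP k (2 ^ m).
  by rewrite dyadicS_left -cell_edge_rcons1; apply: IH.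
rewrite dyadicS_right ?(ltnW lk) // -cell_edge_rcons2; apply: IH.
by move: km; rewrite expnS; lia.
Qed.

Let edge_scale : R := `|p2.1 - p1.1| + `|p2.2 - p1.2| + 1.

Lemma edge_scale_gt0 : 0 < edge_scale.
Proof. by rewrite /edge_scale ltr_pwDr ?addr_ge0. Qed.

Lemma edge12_close t s d : `|t - s| < d / edge_scale ->
  `|(edge12 p1 p2 t).1 - (edge12 p1 p2 s).1| < d /\
  `|(edge12 p1 p2 t).2 - (edge12 p1 p2 s).2| < d.
Proof. by rewrite ltr_pdivlMr ?edge_scale_gt0 //; apply: edge12_coord_close. Qed.

Lemma edge12_in_attractor t : 0 <= t -> t <= 1 -> K (edge12 p1 p2 t).
Proof.
move=> t_ge0 t_le1; apply: closed_coord_approx attractor_closed _ => e e_gt0.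
have [_ [m [k [km ->]]] close] :=
  dyadic01_approx t_ge0 t_le1 (divr_gt0 e_gt0 edge_scale_gt0).
exists (edge12 p1 p2 (k%:R / 2 ^+ m)); split; last exact: edge12_close.
exact: (cell_edge_dyadic_in_attractor [::] km).
Qed.

Lemma edge12_continuous (f : R * R -> R) : {within K, continuous f} ->
  continuous01 (fun t => f (edge12 p1 p2 t)).
Proof.
move=> f_cont t t_ge0 t_le1 e e_gt0.
have [d d_gt0 close] :=
  continuous_within_coord f_cont (edge12_in_attractor t_ge0 t_le1) e_gt0.
exists (d / edge_scale) => [|s s_ge0 s_le1 /edge12_close[h1 h2]].
  by rewrite divr_gt0 ?edge_scale_gt0.
exact: close (edge12_in_attractor s_ge0 s_le1) h1 h2.
Qed.

Lemma attractor_decomp n x : K x ->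
  exists w y, [/\ size w = n, K y & x = Fword p0 p1 p2 w y].
Proof.
case: K_attr => _ [_ K_fix]; elim: n x => [|n IH] x Kx; first by exists [::], x.
move: Kx; rewrite {1}K_fix => -[i _ [y /IH[w [z [<- Kz ->]]] <-]].
by exists (i :: w), z.
Qed.

Lemma cell_vtx_dense x d : K x -> 0 < d ->
  exists w, `|x.1 - (cell_vtx p0 p1 p2 w 0).1| < d /\
            `|x.2 - (cell_vtx p0 p1 p2 w 0).2| < d.
Proof.
move=> Kx d_gt0; case: K_attr => K_compact _.
have [M M_bound] := compact_coord_bounded K_compact.
have [n close] := pow2_unbounded (4 * M) d_gt0.
have [w [y [size_w Ky ->]]] := attractor_decomp n Kx.
exists w; apply: Fword_sub_small; rewrite // size_w.
have [y1 y2] := M_bound _ Ky; have [v1 v2] := M_bound _ (vtx_in_attractor 0).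
have := ler_normB y.1 (vtx p0 p1 p2 0).1; have := ler_normB y.2 (vtx p0 p1 p2 0).2.
lra.
Qed.

Lemma attractor_cst (f : R * R -> R) a : {within K, continuous f} ->
  (forall w j, f (cell_vtx p0 p1 p2 w j) = a) -> forall x, K x -> f x = a.
Proof.
move=> f_cont f_cell x Kx; apply/eqP; rewrite -subr_eq0 -normr_le0 leNgt.
apply/negP => dist_gt0.
have [d d_gt0 close] := continuous_within_coord f_cont Kx dist_gt0.
have [w [h1 h2]] := cell_vtx_dense Kx d_gt0.
by have := close _ (cell_vtx_in_attractor w 0) h1 h2; rewrite f_cell ltxx.
Qed.

End Attractor.

Lemma strictly_decreasing01N (R : realType) (h : R -> R) :
  strictly_decreasing01 h <-> strictly_increasing01 (fun t => - h t).
Proof.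
by split=> h_mono s t s_ge0 st t_le1; have := h_mono s t s_ge0 st t_le1; rewrite ltrN2.
Qed.

Lemma edge12_incrE (R : realType) (p0 p1 p2 : R * R) K (f : R * R -> R) :
  is_attractor p0 p1 p2 K -> harmonic_cells p0 p1 p2 f -> {within K, continuous f} ->
  strictly_increasing01 (fun t => f (edge12 p1 p2 t)) <-> incr_data (f p0) (f p1) (f p2).
Proof.
move=> K_attr f_harm f_cont.
split; first exact: (incr_data_of_edge_incr f_harm).
by apply: (edge_incr_of_incr_data f_harm); exact: (edge12_continuous K_attr f_cont).
Qed.

Theorem theorem3 (R : realType) (p0 p1 p2 : R * R) (K : set (R * R))
    (f : R * R -> R) (alpha beta gamma : R) :
  unit_equilateral p0 p1 p2 ->
  is_attractor p0 p1 p2 K ->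
  sg_harmonic p0 p1 p2 K f ->
  f p0 = alpha -> f p1 = beta -> f p2 = gamma ->
  let g := fun t : R => f (edge12 p1 p2 t) in
  (strictly_increasing01 g <->
     beta < gamma /\ 2 * beta - gamma <= alpha /\ alpha <= 2 * gamma - beta) /\
  ((exists x y, K x /\ K y /\ f x <> f y) ->
   (strictly_increasing01 g \/ strictly_decreasing01 g <->
     (3 * beta - (alpha + beta + gamma)) * (3 * gamma - (alpha + beta + gamma)) <= 0)).
Proof.
move=> _ K_attr f_sg <- <- <- g.
have f_harm := sg_harmonic_cells f_sg; have f_cont := f_sg.1.
have incrE := edge12_incrE K_attr f_harm f_cont.
have decrE : strictly_decreasing01 g <-> incr_data (- f p0) (- f p1) (- f p2).
  rewrite strictly_decreasing01N.
  apply: edge12_incrE K_attr (harmonic_cellsN f_harm) _.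
  by move=> x; apply: continuousN; exact: f_cont.
split; first exact: incrE.
move=> [x [y [Kx [Ky fxy]]]]; split; first by case=> [/incrE | /decrE]; rewrite /incr_data; nra.
move=> prod_le0; have [bc | cb | bc] := ltgtP (f p1) (f p2).
- by left; apply/incrE; rewrite /incr_data; nra.
- by right; apply/decrE; rewrite /incr_data; nra.
have ab : f p0 = f p1 by nra.
have f_cell : forall w j, f (cell_vtx p0 p1 p2 w j) = f p1.
  by apply: cell_vals_cst => // -[[|[|[|//]]] ?].
have f_K := attractor_cst K_attr f_cont f_cell.
by case: fxy; rewrite !f_K.
Qed.
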